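(* Let $\alpha\in[0,1)$, let $G\in\mathcal{G}_n^m$ with strong component $G^*$ and hanging trees $T^{(1)},\dots,T^{(m)}$ ($|\mathcal{V}(T^{(i)})|=n_i$), and let $G'$ be the digraph obtained from $G$ by replacing, for each $i$, the arcs of $T^{(i)}$ by the arcs $(v_i,u)$ for all $u\in\mathcal{V}(T^{(i)})\setminus\{v_i\}$ (so each $T^{(i)}$ becomes an out-star on the same vertex set centred at $v_i$). Then $\rho_\alpha(G')\ge\rho_\alpha(G)$.
   Context: All digraphs are finite, without loops or multiple arcs. $A(G)$ is the adjacency matrix, $D^+(G)$ the diagonal matrix of outdegrees, $A_\alpha(G)=\alpha D^+(G)+(1-\alpha)A(G)$, and $\rho_\alpha(G)$ is the spectral radius (largest modulus of an eigenvalue) of $A_\alpha(G)$. A directed tree is a digraph whose underlying graph is a tree (a single vertex allowed). The class $\mathcal{G}_n^m$ ($2\le m\le n$): $G\in\mathcal{G}_n^m$ consists of a strongly connected digraph $G^*$ on $m$ vertices $v_1,\dots,v_m$ together with directed trees $T^{(1)},\dots,T^{(m)}$, where $T^{(i)}$ has $n_i\ge1$ vertices including $v_i$, the sets $\mathcal{V}(T^{(i)})$ are pairwise disjoint, $\mathcal{V}(T^{(i)})\cap\mathcal{V}(G^* )=\{v_i\}$, $n=\sum_i n_i$, and the arcs of $G$ are those of $G^*$ and of the $T^{(i)}$. The vertices of $G^*$ are labeled so that $d_{G^*}^+(v_1)\ge d_{G^*}^+(v_2)\ge\cdots\ge d_{G^*}^+(v_m)$. *)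

From HB Require Import structures.
From mathcomp Require Import all_boot all_order all_algebra.
From mathcomp Require Import reals.
From mathcomp Require Import complex.
Set Implicit Arguments. Unset Strict Implicit. Unset Printing Implicit Defensive.
Import Order.TTheory GRing.Theory Num.Theory.
Local Open Scope ring_scope.

(* Loops are excluded by a separate [irreflexive G] hypothesis; multiple
   arcs cannot occur in this representation. *)

Definition outdeg n (G : rel 'I_n) (u : 'I_n) : nat := #|[set w | G u w]|.

Definition adjmx (R : nzRingType) n (G : rel 'I_n) : 'M[R]_n :=
  \matrix_(i, j) (G i j)%:R.
Definition outdegmx (R : nzRingType) n (G : rel 'I_n) : 'M[R]_n :=
  \matrix_(i, j) ((i == j)%:R * (outdeg G i)%:R).
Definition Aalpha (R : nzRingType) n (alpha : R) (G : rel 'I_n) : 'M[R]_n :=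
  alpha *: outdegmx R G + (1 - alpha) *: adjmx R G.

(* Spectral radius of a real square matrix: the largest modulus of a complex
   eigenvalue, i.e. of a root of the characteristic polynomial in R[i]. *)
Definition eigenvalues_seq (R : rcfType) n (A : 'M[R]_n) : seq R[i] :=
  sval (closed_field_poly_normal
          (char_poly (map_mx (fun x : R => x%:C%C) A))).

Definition spectral_radius (R : rcfType) n (A : 'M[R]_n) : R :=
  \big[Num.max/0]_(z <- eigenvalues_seq A) ComplexField.Normc.normc z.

Definition rho_alpha (R : rcfType) n (alpha : R) (G : rel 'I_n) : R :=
  spectral_radius (Aalpha alpha G).

(* The strong component G^* is described by its vertex set
   S = {v_1,...,v_m}; [root] sends every vertex to the vertex v_i of G^* whose
   hanging tree T^(i) contains it, so V(T^(i)) = root^-1(v_i). *)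
Definition tree_class n (root : 'I_n -> 'I_n) (v : 'I_n) : {set 'I_n} :=
  [set u | root u == v].

Definition und_in n (G : rel 'I_n) (X : {set 'I_n}) : rel 'I_n :=
  [rel x y | [&& x \in X, y \in X & G x y || G y x]].

Definition is_directed_tree_on n (G : rel 'I_n) (X : {set 'I_n}) : Prop :=
  (forall x y, x \in X -> y \in X -> connect (und_in G X) x y) /\
  #|[set p : 'I_n * 'I_n | [&& p.1 \in X, p.2 \in X & G p.1 p.2]]| = (#|X| - 1)%N.

Definition strongly_connected_on n (G : rel 'I_n) (S : {set 'I_n}) : Prop :=
  forall x y, x \in S -> y \in S ->
    connect [rel a b | [&& a \in S, b \in S & G a b]] x y.

Definition in_Gnm n (m : nat) (G : rel 'I_n) (S : {set 'I_n})
    (root : 'I_n -> 'I_n) : Prop :=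
  [/\ (2 <= m <= n)%N, #|S| = m,
      (forall u, root u \in S) /\ (forall v, v \in S -> root v = v),
      strongly_connected_on G S &
      (forall v, v \in S -> is_directed_tree_on G (tree_class root v)) /\
      (forall u w, G u w -> (u \in S /\ w \in S) \/ root u = root w)].

(* G': keep the arcs of G^*, and replace each T^(i) by the out-star centred at
   v_i on the same vertex set: arcs (v_i, u), u in V(T^(i)) \ {v_i}. *)
Definition star_digraph n (G : rel 'I_n) (S : {set 'I_n})
    (root : 'I_n -> 'I_n) : rel 'I_n :=
  [rel u w | [&& u \in S, w \in S & G u w] || (w \notin S) && (u == root w)].

(* Let B = A_alpha(G') and let l be an eigenvalue of A_alpha(G), with complex
   eigenvector z.
   - If l = alpha d^+_G(u) for a tree vertex u outside G^*, then |l| is at most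
     the diagonal entry B_vv of the root v of u, because in G' the centre v has
     at least as many out-neighbours as u had in G; and every diagonal entry of
     a nonnegative matrix is at most its spectral radius.
   - Otherwise, since no arc of a directed tree lies on a directed cycle, the
     nonzero entries of z propagate along tree arcs down to G^*, and z vanishes
     on tree vertices entered from G^*.  Hence |z| restricted to G^* satisfies
     |l| |z| <= B |z| entrywise, and the Collatz-Wielandt lower bound gives
     |l| <= rho(B). *)

From HB Require Import structures.
From mathcomp Require Import all_boot all_order all_algebra.
From mathcomp Require Import reals.
From mathcomp Require Import complex.
From mathcomp Require Import ring lra zify.
Import Order.TTheory GRing.Theory Num.Theory.
Local Open Scope ring_scope.

Local Notation cnorm := (@ComplexField.Normc.normc _).

Section Reachability.
Context {T : finType}.

(* A rank function towards [r]: if every vertex of [X] is [e]-connected to [r],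
   then some rank decreases strictly along an [e]-edge out of every vertex of [X]
   other than [r] (take the length of a shortest path to [r]). *)
Lemma rank_towards (e : rel T) (X : {set T}) (r : T) :
  (forall x, x \in X -> connect e x r) ->
  exists d : T -> nat, forall x, x \in X -> x != r ->
    exists2 y, e x y & (d y < d x)%N.
Proof.
move=> conn.
pose P x k := [exists p : k.-tuple T, path e x p && (last x p == r)].
pose d x := find (P x) (iota 0 #|T|).
have d_min x k : (k < #|T|)%N -> P x k -> (d x <= k)%N.
  move=> kT Pk; rewrite leqNgt; apply/negP => lt_k.
  by have := before_find 0 lt_k; rewrite nth_iota // add0n Pk.
exists d => x xX xr.
have [k kT Pk] : exists2 k, (k < #|T|)%N & P x k.
  have /connectP [p pp lp] := conn x xX.
  case: (shortenP pp) lp => p' pp' up' _ lp'.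
  exists (size p'); first by have := max_card (mem (x :: p')); rewrite (card_uniqP up').
  by apply/existsP; exists (in_tuple p'); rewrite /= pp' -lp' eqxx.
have hasP : has (P x) (iota 0 #|T|) by apply/hasP; exists k; rewrite ?mem_iota.
have dT : (d x < #|T|)%N by rewrite -(size_iota 0 #|T|) -has_find.
have /existsP [[q szq] /andP [pxq lq]] : P x (d x).
  by have := nth_find 0 hasP; rewrite nth_iota.
case: q szq pxq lq => [|y p] /= /eqP szp; first by move=> _ /eqP lx; rewrite lx eqxx in xr.
case/andP => exy pyp lp; exists y => //.
have Py : P y (size p) by apply/existsP; exists (in_tuple p); rewrite /= pyp lp.
by rewrite -szp ltnS d_min // ltnW // szp.
Qed.

Lemma reach_target (e : rel T) (P Q : pred T) :
  (forall u, P u -> exists2 w, e u w & P w || Q w) ->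
  (forall u w, e u w -> P w -> ~ connect e w u) ->
  forall u, P u -> exists2 s, Q s & connect e u s.
Proof.
move=> step acyc u; have [k] := ubnP #|[set y | connect e u y]|.
elim: k u => // k IH u lt_k Pu.
have [w euw /orP [Pw|Qw]] := step u Pu; last by exists w; rewrite ?connect1.
have smaller : [set y | connect e w y] \proper [set y | connect e u y].
  apply/properP; split.
    by apply/subsetP => y; rewrite !inE; apply: connect_trans; apply: connect1.
  by exists u; rewrite !inE ?connect0 //; apply/negP => /(acyc u w euw Pw).
have [s Qs cws] := IH w (leq_trans (proper_card smaller) lt_k) Pw.
by exists s => //; apply: connect_trans cws; apply: connect1.
Qed.

End Reachability.

Section DirectedTrees.
Context {n : nat}.

Definition arcs_on (H : rel 'I_n) (X : {set 'I_n}) : {set 'I_n * 'I_n} :=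
  [set p | [&& p.1 \in X, p.2 \in X & H p.1 p.2]].

Definition induced (H : rel 'I_n) (X : {set 'I_n}) : rel 'I_n :=
  [rel y z | [&& y \in X, z \in X & H y z]].

(* A vertex set on which the underlying graph of [H] is connected carries at
   least |X| - 1 arcs: orienting the edges of a shortest-path spanning tree
   towards a root gives an injection of X minus the root into the arcs. *)
Lemma connected_arcs_lower_bound {H : rel 'I_n} {X : {set 'I_n}} :
  (forall x y, x \in X -> y \in X -> connect (und_in H X) x y) ->
  (#|X| - 1 <= #|arcs_on H X|)%N.
Proof.
move=> conn; have [->|[r rX]] := set_0Vmem X; first by rewrite cards0.
have [d dP] := @rank_towards _ (und_in H X) X r (fun x xX => conn x r xX rX).
pose arc_of x y := if H x y then (x, y) else (y, x).
pose parent x := [pick y | und_in H X x y && (d y < d x)%N].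
pose tree_arc x := if parent x is Some y then arc_of x y else (x, x).
have tree_arcP x : x \in X :\ r ->
    exists y, [/\ und_in H X x y, (d y < d x)%N & tree_arc x = arc_of x y].
  rewrite in_setD1 => /andP [xr xX]; rewrite /tree_arc /parent.
  case: pickP => [y /andP [exy dy]|none]; first by exists y.
  by have [y exy dy] := dP x xX xr; have := none y; rewrite exy dy.
have tree_arc_sub : tree_arc @: (X :\ r) \subset arcs_on H X.
  apply/subsetP => _ /imsetP [x xX ->]; have [y [exy _ ->]] := tree_arcP x xX.
  move: exy; rewrite /und_in /arc_of /= => /and3P [xX' yX hxy].
  by rewrite inE; case: ifP => /= hh; rewrite xX' yX //; move: hxy; rewrite hh.
have tree_arc_inj : {in X :\ r &, injective tree_arc}.
  move=> x1 x2 /tree_arcP [y1 [_ d1 ->]] /tree_arcP [y2 [_ d2 ->]].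
  rewrite /arc_of; case: ifP => _; case: ifP => _ [] e1 e2 //; subst;
    by have := ltn_trans d1 d2; rewrite ltnn.
have := subset_leq_card tree_arc_sub; rewrite card_in_imset //.
by rewrite (cardsD1 r X) rX add1n subn1.
Qed.

(* In a directed tree no arc lies on a directed cycle: otherwise the arc could
   be deleted without disconnecting the tree, leaving too few arcs. *)
Lemma directed_tree_acyclic {H : rel 'I_n} {X : {set 'I_n}} {a u : 'I_n} :
  is_directed_tree_on H X -> a \in X -> u \in X -> a != u -> H a u ->
  ~ connect (induced H X) u a.
Proof.
move=> [tconn tcount] aX uX au Hau /connectP [p pp ea].
case: (shortenP pp) ea => {pp}p pp up _ ea.
pose H' := [rel y z | H y z && ((y, z) != (a, u))].
have H'_sym : symmetric (und_in H' X) by move=> y z; rewrite /und_in /= andbCA orbC.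
(* a shortest walk from [u] never returns to [u], hence avoids the arc (a, u) *)
have walk_avoids y q : path (induced H X) y q -> u \notin q -> y \in X ->
    connect (und_in H' X) y (last y q).
  elim: q y => [|w q IH] y /=; first by move=> *; apply: connect0.
  move=> /andP [/and3P [yX wX hyw] pq]; rewrite inE negb_or => /andP [uw uq] _.
  apply: connect_trans (IH w pq uq wX); apply: connect1.
  rewrite /und_in /= yX wX hyw /=; apply/orP; left.
  by apply: contra uw => /eqP [_ ->].
have cua : connect (und_in H' X) u a.
  by rewrite ea; apply: walk_avoids => //; case/andP: up.
have H'_conn x y : x \in X -> y \in X -> connect (und_in H' X) x y.
  move=> xX yX; apply: connect_sub (tconn x y xX yX) => y' z'.
  rewrite /und_in /= => /and3P [y'X z'X /orP [hyz|hzy]].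
    have [[-> ->]|ne] := eqVneq (y', z') (a, u); first by rewrite (sym_connect_sym H'_sym).
    by apply: connect1; rewrite /und_in /= y'X z'X hyz ne.
  have [[-> ->]|ne] := eqVneq (z', y') (a, u); first exact: cua.
  by apply: connect1; rewrite /und_in /= y'X z'X hzy ne orbT.
have arcs' : arcs_on H' X = arcs_on H X :\ (a, u).
  by apply/setP => -[y z]; rewrite !inE /=; case: (_ != _); rewrite ?andbT ?andbF.
have := connected_arcs_lower_bound H'_conn; rewrite arcs'.
have := cardsD1 (a, u) (arcs_on H X); rewrite inE /= aX uX Hau tcount.
have : (2 <= #|X|)%N.
  have sub : [set a; u] \subset X by rewrite subUset !sub1set aX uX.
  by have := subset_leq_card sub; rewrite cards2 au.
rewrite add1n; move: #|X| #|arcs_on H X :\ (a, u)| => x c; lia.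
Qed.

End DirectedTrees.

Section HangingTrees.
Context {n m : nat} {G : rel 'I_n} {S : {set 'I_n}} {root : 'I_n -> 'I_n}.
Hypotheses (irrG : irreflexive G) (HG : in_Gnm m G S root).

Local Notation G' := (star_digraph G S root).

Lemma root_in_core u : root u \in S.
Proof. by case: HG => _ _ [rS _] _ _. Qed.

Lemma root_id v : v \in S -> root v = v.
Proof. by case: HG => _ _ [_ rfix] _ _; apply: rfix. Qed.

Lemma arc_cases {u w : 'I_n} : G u w -> (u \in S /\ w \in S) \/ root u = root w.
Proof. by case: HG => _ _ _ _ [_ arcsG]; apply: arcsG. Qed.

Lemma hanging_tree {v} : v \in S -> is_directed_tree_on G (tree_class root v).
Proof. by case: HG => _ _ _ _ [trees _]; apply: trees. Qed.

Lemma core_connect {x y} : x \in S -> y \in S -> connect G x y.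
Proof.
case: HG => _ _ _ sconn _ xS yS; apply: connect_sub (sconn x y xS yS) => a b.
by case/and3P => _ _ gab; apply: connect1.
Qed.

Lemma tree_classE v y : (y \in tree_class root v) = (root y == v).
Proof. by rewrite inE. Qed.

(* Walks of G between two vertices of T^(v) can be projected into T^(v): the
   only vertex of T^(v) adjacent to the rest of G is v, so every excursion
   outside T^(v) can be collapsed onto v. *)
Lemma walk_in_tree_class {v u a} : v \in S ->
  u \in tree_class root v -> a \in tree_class root v ->
  connect G u a -> connect (induced G (tree_class root v)) u a.
Proof.
move=> vS uX aX /connectP [p pp ea]; set X := tree_class root v in uX aX *.
have core_in_X y : y \in S -> y \in X -> y = v.
  by move=> yS; rewrite tree_classE root_id // => /eqP.
pose pi y := if y \in X then y else v.
have step y z : G y z -> connect (induced G X) (pi y) (pi z).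
  move=> gyz; rewrite /pi; case yX: (y \in X); case zX: (z \in X).
  - by apply: connect1; rewrite /induced /= yX zX gyz.
  - case: (arc_cases gyz) => [[yS _]|ryz]; first by rewrite (core_in_X y yS yX) connect0.
    by move: yX zX; rewrite !tree_classE ryz => ->.
  - case: (arc_cases gyz) => [[_ zS]|ryz]; first by rewrite (core_in_X z zS zX) connect0.
    by move: yX zX; rewrite !tree_classE ryz => ->.
  - exact: connect0.
have pi_walk y q : path G y q -> connect (induced G X) (pi y) (pi (last y q)).
  elim: q y => [|w q IH] y /=; first by move=> _; apply: connect0.
  by case/andP => gyw pq; apply: connect_trans (step _ _ gyw) (IH _ pq).
by have := pi_walk u p pp; rewrite -ea /pi uX aX.
Qed.

Lemma no_cycle_through_tree_arc {u a} : u \notin S -> G a u -> ~ connect G u a.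
Proof.
move=> uS au ua; pose v := root u; have vS : v \in S := root_in_core u.
have ra : root a = v by case: (arc_cases au) => [[_ uS']|//]; rewrite uS' in uS.
have uX : u \in tree_class root v by rewrite tree_classE.
have aX : a \in tree_class root v by rewrite tree_classE ra.
have a_neq_u : a != u by apply: contraTneq au => ->; rewrite irrG.
exact: directed_tree_acyclic (hanging_tree vS) aX uX a_neq_u au
  (walk_in_tree_class vS uX aX ua).
Qed.

Lemma star_core_arc u w : u \in S -> w \in S -> G' u w = G u w.
Proof. by move=> uS wS; rewrite /star_digraph /= uS wS /= orbF. Qed.

(* Outdegrees can only grow on G^*: a core vertex keeps its core arcs and its
   tree arcs point to its own tree, all of which become star arcs. *)
Lemma outdeg_core_le u : u \in S -> (outdeg G u <= outdeg G' u)%N.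
Proof.
move=> uS; apply: subset_leq_card; apply/subsetP => w; rewrite !inE => guw.
rewrite /star_digraph /= uS guw /=; case wS: (w \in S) => //=.
case: (arc_cases guw) => [[_ wS']|ruw]; first by rewrite wS' in wS.
by rewrite -ruw root_id.
Qed.

(* A tree vertex u has at most |T^(v)| - 1 out-neighbours, all inside its tree
   T^(v), v = root u; in G' the centre v is joined to all of T^(v) minus v. *)
Lemma outdeg_tree_le u : u \notin S -> (outdeg G u <= outdeg G' (root u))%N.
Proof.
move=> uS; set v := root u; set X := tree_class root v.
have uX : u \in X by rewrite tree_classE.
have vX : v \in X by rewrite tree_classE root_id ?root_in_core.
apply: (@leq_trans #|X :\ u|).
  apply: subset_leq_card; apply/subsetP => w; rewrite !inE => guw.
  have -> /= : w != u by apply: contraTneq guw => ->; rewrite irrG.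
  by case: (arc_cases guw) => [[uS' _]|<-]; first by rewrite uS' in uS.
have -> : #|X :\ u| = #|X :\ v|.
  by have := cardsD1 u X; have := cardsD1 v X; rewrite uX vX => -> /addnI ->.
apply: subset_leq_card; apply/subsetP => w; rewrite !inE => /andP [wv rw].
apply/orP; right; rewrite eq_sym rw andbT.
by apply: contraNN wv => wS; rewrite -(eqP rw) root_id.
Qed.

End HangingTrees.

Section GrowthRates.
Context {R : realType}.

Lemma bernoulli_le {s : R} (k : nat) : 1 <= s -> 1 + k%:R * (s - 1) <= s ^+ k.
Proof.
move=> s1; elim: k => [|k IH]; first by rewrite mul0r addr0 expr0.
rewrite exprS -natr1.
have : 0 <= (k%:R : R) * ((s - 1) * (s - 1)) by apply: mulr_ge0 => //; nra.
nra.
Qed.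

Lemma linear_le_geometric {s : R} : 1 < s ->
  exists E, 0 <= E /\ forall k, k.+1%:R <= E * s ^+ k.
Proof.
move=> s1; have sp : 0 < s - 1 by lra.
exists (1 + (s - 1)^-1); split; first by have := invr_gt0 (s - 1); lra.
move=> k; have bern := bernoulli_le k (ltW s1).
have : (1 + (s - 1)^-1) * (1 + k%:R * (s - 1)) <= (1 + (s - 1)^-1) * s ^+ k.
  by apply: ler_wpM2l => //; have := invr_gt0 (s - 1); lra.
have -> : (1 + (s - 1)^-1) * (1 + k%:R * (s - 1)) =
    1 + k%:R * (s - 1) + (s - 1)^-1 + k%:R by field; rewrite lt0r_neq0.
have : 0 <= (k%:R : R) * (s - 1) by apply: mulr_ge0 => //; lra.
have := invr_gt0 (s - 1); rewrite -natr1; lra.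
Qed.

(* Polynomial growth is dominated by any geometric growth of ratio q > 1:
   split q = sqrt q * sqrt q and induct on the degree. *)
Lemma poly_le_geometric (d : nat) {q : R} : 1 < q ->
  exists D, 0 <= D /\ forall k, k.+1%:R ^+ d <= D * q ^+ k.
Proof.
elim: d q => [|d IH] q q1.
  by exists 1; split => // k; rewrite expr0 mul1r exprn_ege1 // ltW.
pose s := Num.sqrt q; have s1 : 1 < s by rewrite -sqrtr1 ltr_sqrt //; lra.
have [D [D0 HD]] := IH s s1; have [E [E0 HE]] := linear_le_geometric s1.
exists (D * E); split => [|k]; first exact: mulr_ge0.
have -> : q ^+ k = s ^+ k * s ^+ k by rewrite -exprMn -expr2 sqr_sqrtr //; lra.
by rewrite exprSr mulrACA; apply: ler_pM => //; apply: exprn_ge0.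
Qed.

Lemma geometric_not_poly_bounded {q c C : R} {d : nat} : 1 < q -> 0 < c ->
  ~ (forall k, c * q ^+ k <= C * k.+1%:R ^+ d).
Proof.
move=> q1 c0 bound; have [D [D0 HD]] := poly_le_geometric d.+1 q1.
have C0 : 0 < C by have := bound 0%N; rewrite expr0 expr1n !mulr1; lra.
have linear k : c * k.+1%:R <= D * C.
  have pk : 0 < (k.+1%:R : R) ^+ d by apply: exprn_gt0.
  rewrite -(ler_pM2r pk) -mulrA -exprS.
  apply: le_trans (_ : c * (D * q ^+ k) <= _); first by rewrite ler_pM2l.
  by rewrite mulrCA -mulrA ler_wpM2l // bound.
have DC0 : 0 <= D * C / c by rewrite divr_ge0 ?mulr_ge0 // ltW.
have := linear (Num.bound (D * C / c)); have := archi_boundP DC0.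
rewrite ltr_pdivrMr // -natr1; lra.
Qed.

Lemma recurrence_growth (a : nat -> R) (c rho C : R) (d : nat) :
  0 < rho -> 0 <= c <= rho -> 0 <= C -> (forall k, 0 <= a k) ->
  (forall k, a k.+1 <= c * a k + C * k.+1%:R ^+ d * rho ^+ k) ->
  exists D, forall k, a k <= D * k.+1%:R ^+ d.+1 * rho ^+ k.
Proof.
move=> rho0 /andP [c0 c_rho] C0 a0 rec; set D := a 0%N + C / rho.
have D0 : 0 <= D by rewrite addr_ge0 // divr_ge0 // ltW.
have C_le : C <= D * rho by rewrite -ler_pdivrMr // lerDr.
exists D; elim=> [|k IH]; first by rewrite !expr0 expr1n !mulr1 lerDl divr_ge0 // ltW.
apply: le_trans (rec k) _.
set b := (k.+1%:R : R) in IH *; set t := rho ^+ k in IH *.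
have -> : D * k.+2%:R ^+ d.+1 * rho ^+ k.+1 = D * ((b + 1) * (b + 1) ^+ d) * (t * rho).
  by rewrite -natr1 exprS exprSr.
have b0 : 0 <= b by []; have t0 : 0 < t by apply: exprn_gt0.
have P0 : 0 <= b ^+ d by apply: exprn_ge0.
have homogeneous : c * a k <= rho * (D * (b * b ^+ d) * t).
  by apply: ler_pM => //; rewrite -exprS.
have forcing : C * b ^+ d * t <= D * rho * b ^+ d * t.
  by apply: ler_wpM2r; [exact: ltW | apply: ler_wpM2r].
have degree_up :
    D * ((b + 1) * b ^+ d) * (t * rho) <= D * ((b + 1) * (b + 1) ^+ d) * (t * rho).
  apply: ler_wpM2r; first by rewrite mulr_ge0 // ltW.
  apply: ler_wpM2l => //; apply: ler_wpM2l; first lra.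
  by apply: lerXn2r; rewrite ?nnegrE //; lra.
have regroup : D * ((b + 1) * b ^+ d) * (t * rho) =
    rho * (D * (b * b ^+ d) * t) + D * rho * b ^+ d * t by ring.
lra.
Qed.

End GrowthRates.
Section ComplexModulus.
Context {R : rcfType}.

Lemma cnorm_real (x : R) : cnorm (x%:C)%C = `|x|.
Proof. by rewrite /ComplexField.Normc.normc /= expr0n /= addr0 sqrtr_sqr. Qed.

Lemma cnorm_ge0 (z : R[i]) : 0 <= cnorm z.
Proof. by case: z => a b; rewrite /ComplexField.Normc.normc sqrtr_ge0. Qed.

Lemma cnorm_gt0 (z : R[i]) : z != 0 -> 0 < cnorm z.
Proof.
move=> z0; rewrite lt_def cnorm_ge0 andbT; apply: contra z0 => /eqP z0.
by rewrite (ComplexField.Normc.eq0_normc z0).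
Qed.

Lemma cnorm_sum (I : finType) (F : I -> R[i]) : cnorm (\sum_i F i) <= \sum_i cnorm (F i).
Proof.
apply: (big_ind2 (fun a b => cnorm a <= b)) => //.
  by rewrite ComplexField.Normc.normc0.
by move=> a b c d h1 h2; apply: le_trans (le_normcD _ _) _; apply: lerD.
Qed.

End ComplexModulus.

Section SpectralRadius.
Context {R : realType}.

Local Notation toC := (fun x : R => (x%:C)%C).

Lemma eigenvalues_seqE {n} (A : 'M[R]_n) :
  char_poly (map_mx toC A) = \prod_(mu <- eigenvalues_seq A) ('X - mu%:P).
Proof.
rewrite /eigenvalues_seq; case: closed_field_poly_normal => s /= Hs.
by rewrite [LHS]Hs (monicP (char_poly_monic _)) scale1r.
Qed.

Lemma spectral_radius_ge0 {n} (A : 'M[R]_n) : 0 <= spectral_radius A.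
Proof. exact: bigmax_ge_id. Qed.

Lemma eigenvalue_le_spectral_radius {n} (A : 'M[R]_n) (mu : R[i]) :
  mu \in eigenvalues_seq A -> cnorm mu <= spectral_radius A.
Proof. by move=> mu_in; apply: le_bigmax_seq. Qed.

Lemma spectral_radius_le {n} (A : 'M[R]_n) (c : R) : 0 <= c ->
  (forall mu, mu \in eigenvalues_seq A -> cnorm mu <= c) -> spectral_radius A <= c.
Proof. by move=> c0 le_c; rewrite /spectral_radius big_seq; apply: bigmax_le. Qed.

Lemma char_poly_trmx (F : comNzRingType) n (A : 'M[F]_n) : char_poly A^T = char_poly A.
Proof.
by rewrite /char_poly -det_tr; congr (\det _); apply/matrixP => i j; rewrite !mxE eq_sym.
Qed.

Lemma eigenvector_of_eigenvalue {n} (A : 'M[R]_n) (l : R[i]) : l \in eigenvalues_seq A ->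
  exists z : 'I_n -> R[i], (exists j, z j != 0) /\
    forall u, \sum_w (A u w)%:C%C * z w = l * z u.
Proof.
move=> l_in; have : root (char_poly (map_mx toC A)) l.
  by rewrite eigenvalues_seqE root_prod_XsubC.
rewrite -char_poly_trmx -eigenvalue_root_char => /eigenvalueP [v Hv v0].
exists (fun j => v 0 j); split.
  apply/existsP; apply: contraNT v0; rewrite negb_exists => /forallP v0.
  by apply/eqP/matrixP => i j; rewrite (ord1 i) mxE; apply/eqP; have := v0 j; rewrite negbK.
move=> u; have := congr1 (fun M : 'rV_n => M 0 u) Hv; rewrite !mxE => <-.
by apply: eq_bigr => w _; rewrite !mxE mulrC.
Qed.

Lemma map_mx_exp {n} (B : 'M[R]_n.+1) k : map_mx toC (B ^+ k) = map_mx toC B ^+ k.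
Proof.
elim: k => [|k IH]; first by rewrite !expr0 map_mx1.
by rewrite !exprS -!mulmxE map_mxM IH.
Qed.

Lemma annihilated_vector_growth {n} {B : 'M[R[i]]_n.+1} {rho : R} {s : seq R[i]}
    {w : 'cV_n.+1} (j : 'I_n.+1) :
  0 < rho -> (forall mu, mu \in s -> cnorm mu <= rho) ->
  horner_mx B (\prod_(mu <- s) ('X - mu%:P)) *m w = 0 ->
  exists C, forall k, cnorm ((B ^+ k *m w) j 0) <= C * k.+1%:R ^+ size s * rho ^+ k.
Proof.
move=> rho0; elim: s w => [|mu s IH] w s_le Hw.
  move: Hw; rewrite big_nil rmorph1 mul1mx => ->.
  by exists 0 => k; rewrite mulmx0 mxE ComplexField.Normc.normc0 !mul0r.
pose w' := (B - mu%:M) *m w.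
have Hw' : horner_mx B (\prod_(nu <- s) ('X - nu%:P)) *m w' = 0.
  move: Hw; rewrite big_cons mulrC rmorphM /= rmorphB /= horner_mx_X horner_mx_C.
  by rewrite /w' mulmxA -mulmxE.
have [C1 HC1] := IH w' (fun nu nu_s => s_le nu (mem_behead (s := mu :: s) nu_s)) Hw'.
have C10 : 0 <= C1.
  by have := HC1 0%N; rewrite !expr0 expr1n !mulr1; apply: le_trans; apply: cnorm_ge0.
have step k : (B ^+ k.+1 *m w) j 0 = mu * (B ^+ k *m w) j 0 + (B ^+ k *m w') j 0.
  rewrite exprSr -mulmxE -mulmxA.
  have -> : B *m w = w' + mu *: w by rewrite /w' mulmxBl mul_scalar_mx addrNK.
  by rewrite mulmxDr -scalemxAr !mxE addrC.
apply: (@recurrence_growth _ (fun k => cnorm ((B ^+ k *m w) j 0)) (cnorm mu) rho C1)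
  => // [|k|k].
- by rewrite cnorm_ge0 s_le ?mem_head.
- exact: cnorm_ge0.
- rewrite step; apply: le_trans (le_normcD _ _) _.
  by rewrite ComplexField.Normc.normcM lerD ?HC1.
Qed.

Lemma subinvariant_iterate {n} {B : 'M[R]_n} {x : 'I_n -> R} {r : R} :
  (forall i j, 0 <= B i j) -> 0 <= r ->
  (forall u, r * x u <= \sum_w B u w * x w) ->
  forall k u, r ^+ k * x u <= (B ^+ k *m \col_i x i) u 0.
Proof.
move=> B0 r0 sub; elim=> [|k IH] u; first by rewrite expr0 mul1r mul1mx mxE.
rewrite [B ^+ _]exprS -mulmxE -mulmxA mxE.
apply: le_trans (_ : r ^+ k * \sum_w B u w * x w <= _).
  by rewrite exprS -mulrA mulrCA ler_wpM2l ?exprn_ge0.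
rewrite mulr_sumr; apply: ler_sum => w _; rewrite mulrCA.
by apply: ler_wpM2l.
Qed.

(* Collatz-Wielandt lower bound: if B >= 0 and x >= 0, x <> 0, satisfy
   r x <= B x, then r <= rho(B).  Otherwise choose rho(B) < rho' < r: by
   Cayley-Hamilton, B^k x grows at most like (k+1)^n rho'^k, while it grows at
   least like r^k. *)
Lemma collatz_wielandt_lower {n} (B : 'M[R]_n) (x : 'I_n -> R) (r : R) (j0 : 'I_n) :
  (forall i j, 0 <= B i j) -> (forall i, 0 <= x i) -> 0 < x j0 ->
  (forall u, r * x u <= \sum_w B u w * x w) -> r <= spectral_radius B.
Proof.
case: n B x j0 => [|n] B x j0; first by case: j0.
move=> B0 x0 xj0 sub; have rho0 := spectral_radius_ge0 B.
rewrite leNgt; apply/negP => lt_rho_r.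
pose rho' := (spectral_radius B + r) / 2.
have rho'0 : 0 < rho' by rewrite /rho'; lra.
have rho'_r : rho' < r by rewrite /rho'; lra.
have ev_le mu : mu \in eigenvalues_seq B -> cnorm mu <= rho'.
  by move/eigenvalue_le_spectral_radius; rewrite /rho'; lra.
have killed : horner_mx (map_mx toC B) (\prod_(mu <- eigenvalues_seq B) ('X - mu%:P))
    *m map_mx toC (\col_i x i) = 0.
  by rewrite -eigenvalues_seqE Cayley_Hamilton mul0mx.
have [C HC] := annihilated_vector_growth j0 rho'0 ev_le killed.
apply: (@geometric_not_poly_bounded _ (r / rho') (x j0) C (size (eigenvalues_seq B))) => //.
  by rewrite ltr_pdivlMr // mul1r.
move=> k; rewrite expr_div_n mulrC mulrAC ler_pdivrMr ?exprn_gt0 //.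
have r0 : 0 <= r by apply: le_trans rho0 (ltW lt_rho_r).
apply: le_trans (subinvariant_iterate B0 r0 sub k j0) _.
apply: le_trans (HC k); rewrite -map_mx_exp -map_mxM [X in cnorm X]mxE cnorm_real.
exact: ler_norm.
Qed.

Lemma diag_le_spectral_radius {n} (B : 'M[R]_n) (v : 'I_n) :
  (forall i j, 0 <= B i j) -> B v v <= spectral_radius B.
Proof.
move=> B0; apply: (@collatz_wielandt_lower n B (fun w => (w == v)%:R) _ v) => //.
  by rewrite eqxx ltr01.
move=> u; rewrite (bigD1 v) //= eqxx mulr1 big1 ?addr0 => [|w /negbTE ->].
  by have [->|_] := eqVneq u v; rewrite ?mulr1 ?mulr0.
by rewrite mulr0.
Qed.

End SpectralRadius.

Section AlphaMatrix.
Context {R : numDomainType} {alpha : R}.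
Hypothesis alpha01 : 0 <= alpha <= 1.

Lemma AalphaE {n} (H : rel 'I_n) u w :
  Aalpha alpha H u w = alpha * ((u == w)%:R * (outdeg H u)%:R) + (1 - alpha) * (H u w)%:R.
Proof. by rewrite !mxE. Qed.

Lemma Aalpha_ge0 {n} (H : rel 'I_n) u w : 0 <= Aalpha alpha H u w.
Proof.
by case/andP: alpha01 => a0 a1; rewrite AalphaE addr_ge0 ?mulr_ge0 // subr_ge0.
Qed.

End AlphaMatrix.

Section StarComparison.
Context {R : realType} {n m : nat} {alpha : R}.
Context {G : rel 'I_n} {S : {set 'I_n}} {root : 'I_n -> 'I_n}.
Hypotheses (alpha01 : 0 <= alpha <= 1) (irrG : irreflexive G) (HG : in_Gnm m G S root).

Local Notation G' := (star_digraph G S root).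
Local Notation A := (Aalpha alpha G).
Local Notation B := (Aalpha alpha G').

Lemma Aalpha_core_le u w : u \in S -> w \in S -> A u w <= B u w.
Proof.
move=> uS wS; rewrite !AalphaE star_core_arc // lerD // ler_wpM2l ?ler_wpM2l //.
- by case/andP: alpha01.
- by rewrite ler_nat (outdeg_core_le HG).
Qed.

Lemma tree_degree_le_rho u : u \notin S -> alpha * (outdeg G u)%:R <= rho_alpha alpha G'.
Proof.
move=> uS; apply: le_trans (diag_le_spectral_radius B (root u) (Aalpha_ge0 alpha01 _)).
rewrite AalphaE eqxx mul1r -[X in X <= _]addr0 lerD ?mulr_ge0 ?ler0n //.
- by rewrite ler_wpM2l ?ler_nat ?(outdeg_tree_le irrG HG) //; case/andP: alpha01.
- by case/andP: alpha01 => _; rewrite subr_ge0.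
Qed.

Section Eigenvector.
Context {l : R[i]} {z : 'I_n -> R[i]}.
Hypothesis eigen : forall u, \sum_w (A u w)%:C%C * z w = l * z u.
Hypothesis l_not_tree_degree : forall u, u \notin S -> l != (alpha * (outdeg G u)%:R)%:C%C.

(* At a tree vertex u the eigen-equation reads
   (l - alpha d^+(u)) z_u = (1 - alpha) sum_(u -> w) z_w,
   so a nonzero entry at u forces a nonzero entry at an out-neighbour. *)
Lemma eigvec_tree_successor u : u \notin S -> z u != 0 -> exists2 w, G u w & z w != 0.
Proof.
move=> uS zu; have [/existsP [w /andP [guw zw]]|] := boolP [exists w, G u w && (z w != 0)].
  by exists w.
rewrite negb_exists => /forallP succ0; have := eigen u.
rewrite (bigD1 u) //= big1 => [|w wu]; last first.
  rewrite AalphaE eq_sym (negbTE wu) mul0r mulr0 add0r.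
  case guw: (G u w); last by rewrite mulr0 rmorph0 mul0r.
  by have := succ0 w; rewrite guw negbK => /eqP ->; rewrite mulr0.
rewrite addr0 AalphaE eqxx irrG mulr0 addr0 mul1r => /(mulIf zu) l_eq.
by have := l_not_tree_degree u uS; rewrite l_eq eqxx.
Qed.

(* Following nonzero entries downwards along acyclic tree arcs, every nonzero
   entry outside G^* leads to a nonzero entry on G^*. *)
Lemma eigvec_reaches_core u : u \notin S -> z u != 0 ->
  exists2 s, (s \in S) && (z s != 0) & connect G u s.
Proof.
move=> uS zu; apply: (@reach_target _ G [pred u | (u \notin S) && (z u != 0)]
  [pred s | (s \in S) && (z s != 0)]); rewrite /= ?uS ?zu //.
- move=> y /andP [yS zy]; have [w gyw zw] := eigvec_tree_successor y yS zy.
  by exists w; rewrite //= zw !andbT orNb.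
- by move=> y w gyw /andP [wS _]; exact: (no_cycle_through_tree_arc irrG HG wS gyw).
Qed.

(* The eigenvector vanishes on every tree vertex entered from G^*: a nonzero
   entry there would lead back to G^* and close a cycle through a tree arc. *)
Lemma eigvec_core_exit_vanish v w : v \in S -> w \notin S -> G v w -> z w = 0.
Proof.
move=> vS wS gvw; apply/eqP/negPn/negP => zw.
have [s /andP [sS _] cws] := eigvec_reaches_core w wS zw.
have cwv := connect_trans cws (core_connect HG sS vS).
exact: (no_cycle_through_tree_arc irrG HG wS gvw cwv).
Qed.

(* Restricted to G^*, |z| is a nonnegative subinvariant vector of A_alpha(G'):
   |l| |z_u| <= sum_w A_uw |z_w| <= sum_(w in S) B_uw |z_w|. *)
Lemma core_eigenvalue_bound : (exists j, z j != 0) -> cnorm l <= rho_alpha alpha G'.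
Proof.
move=> [j zj].
have [s0 /andP [s0S zs0]] : exists s, (s \in S) && (z s != 0).
  case jS: (j \in S); first by exists j; rewrite jS.
  by have [s ? _] := eigvec_reaches_core j (negbT jS) zj; exists s.
pose x w := if w \in S then cnorm (z w) else 0.
have x0 w : 0 <= x w by rewrite /x; case: ifP; rewrite ?cnorm_ge0.
apply: (@collatz_wielandt_lower _ n B x _ s0) => //.
- exact: Aalpha_ge0.
- by rewrite /x s0S cnorm_gt0.
move=> u; have [uS|uS] := boolP (u \in S); last first.
  rewrite /x (negbTE uS) mulr0; apply: sumr_ge0 => w _.
  by rewrite mulr_ge0 ?Aalpha_ge0 ?x0.
rewrite /x uS -ComplexField.Normc.normcM -eigen; apply: le_trans (cnorm_sum _ _) _.
apply: ler_sum => w _.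
rewrite ComplexField.Normc.normcM cnorm_real ger0_norm ?Aalpha_ge0 //.
case: ifP => wS; first by rewrite ler_wpM2r ?cnorm_ge0 ?Aalpha_core_le.
rewrite mulr0; case guw: (G u w).
  rewrite (eigvec_core_exit_vanish u w uS (negbT wS) guw).
  by rewrite ComplexField.Normc.normc0 mulr0.
have uw : (u == w) = false by apply: contraFF wS => /eqP <-.
by rewrite AalphaE uw guw mul0r !mulr0 addr0 mul0r.
Qed.

End Eigenvector.
End StarComparison.

Theorem theorem2p7 (R : realType) (n m : nat) (alpha : R)
    (G : rel 'I_n) (S : {set 'I_n}) (root : 'I_n -> 'I_n) :
  0 <= alpha < 1 ->
  irreflexive G ->
  in_Gnm m G S root ->
  rho_alpha alpha G <= rho_alpha alpha (star_digraph G S root).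
Proof.
move=> /andP [a0 a1] irrG HG; have alpha01 : 0 <= alpha <= 1 by rewrite a0 ltW.
apply: spectral_radius_le => [|l /eigenvector_of_eigenvalue [z [nz eigen]]].
  exact: spectral_radius_ge0.
have [/existsP [u /andP [uS /eqP ->]]|] :=
  boolP [exists u, (u \notin S) && (l == (alpha * (outdeg G u)%:R)%:C%C)].
  rewrite cnorm_real ger0_norm ?mulr_ge0 //.
  exact: tree_degree_le_rho alpha01 irrG HG u uS.
rewrite negb_exists => /forallP not_tree.
apply: (core_eigenvalue_bound alpha01 irrG HG eigen _ nz) => u uS.
by have := not_tree u; rewrite uS.
Qed.
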